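(* Let $S$ be a commutative semiring and $\mathcal G$ an ample groupoid. Define the relation $\equiv$ on $A_S(\mathcal G)$ by $f\equiv g$ iff $f(\alpha)=g(\alpha)$ for all $\alpha\in\mathcal G$ with $s(\alpha),r(\alpha)\in\mathcal T$. Then $\equiv$ is a congruence on $A_S(\mathcal G)$ (and it is moreover compatible with $S$-scalar multiplication).
   Context: A commutative semiring has commutative monoid addition (neutral $0$), commutative associative multiplication with $1$, distributivity and absorbing $0$. An ample groupoid is a topological groupoid whose unit space $\mathcal G^{(0)}$ is locally compact Hausdorff and totally disconnected and whose source and range maps $s,r$ are local homeomorphisms. $\mathcal T=\{u\in\mathcal G^{(0)}:\{\gamma\in\mathcal G: s(\gamma)=r(\gamma)=u\}=\{u\}\}$ is the set of units with trivial isotropy group. The Steinberg algebra $A_S(\mathcal G)$ is the set of functions $\mathcal G\to S$ of the form $\sum_{U\in F}s_U1_U$ with $F$ a finite set of compact open bisections (subsets on which $s,r$ are homeomorphisms onto their images), with pointwise addition and convolution $(f*g)(\gamma)=\sum_{\alpha\beta=\gamma}f(\alpha)g(\beta)$. A congruence on a hemiring $R$ is an equivalence relation $\sim$ such that $r\sim s$ implies $t+r\sim t+s$, $tr\sim ts$, $rt\sim st$ for all $t\in R$. *)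

From HB Require Import structures.
From mathcomp Require Import all_boot all_order all_algebra.
From mathcomp Require Import boolp classical_sets functions fsbigop topology.
Set Implicit Arguments. Unset Strict Implicit. Unset Printing Implicit Defensive.
Import GRing.Theory.
Local Open Scope classical_set_scope.
Local Open Scope ring_scope.

(** Abstract groupoid on a carrier [G]; the unit space is embedded in [G]
    as the set of fixed points of [src]. [mul a b] is meaningful when
    [src a = rng b] (composable pair (a,b)). *)
Record groupoid (G : Type) := Groupoid {
  src : G -> G;
  rng : G -> G;
  inv : G -> G;
  mul : G -> G -> G;
  src_rng : forall a, src (rng a) = rng a;
  rng_src : forall a, rng (src a) = src a;
  src_mul : forall a b, src a = rng b -> src (mul a b) = src b;
  rng_mul : forall a b, src a = rng b -> rng (mul a b) = rng a;
  mulA : forall a b c, src a = rng b -> src b = rng c ->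
           mul (mul a b) c = mul a (mul b c);
  mul_rng : forall a, mul (rng a) a = a;
  mul_src : forall a, mul a (src a) = a;
  src_inv : forall a, src (inv a) = rng a;
  rng_inv : forall a, rng (inv a) = src a;
  mul_inv : forall a, mul a (inv a) = rng a;
  inv_mul : forall a, mul (inv a) a = src a
}.

Section Defs.
Context {G : topologicalType} (g : groupoid G).

Definition units : set G := [set u | src g u = u].

Definition composable : set (G * G) := [set p | src g p.1 = rng g p.2].

Definition open_in (B A : set G) := exists V, open V /\ A = V `&` B.

Definition homeo_onto_image (f : G -> G) (U : set G) :=
  [/\ ({in U &, injective f}), {within U, continuous f} &
      forall O, open O -> open_in (f @` U) (f @` (O `&` U))].

Definition local_homeo_to_units (f : G -> G) :=
  (forall x, units (f x)) /\
  forall x, exists U, [/\ open U, U x, open_in units (f @` U) &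
                          homeo_onto_image f U].

Definition units_lc_hausdorff_td :=
  [/\
      (forall x y, units x -> units y -> x <> y ->
         exists U V, [/\ open U, open V, U x, V y & (U `&` V `&` units = set0)]),
      (forall x, units x -> exists K, [/\ compact K, (K `<=` units) &
          (exists V, [/\ open V, V x & (V `&` units `<=` K)])]) &
      totally_disconnected units].

Definition ample :=
  [/\ {within composable, continuous (fun p => mul g p.1 p.2)},
      continuous (inv g),
      units_lc_hausdorff_td,
      local_homeo_to_units (src g) &
      local_homeo_to_units (rng g)].

Definition trivial_isotropy : set G :=
  [set u | units u /\ forall a, src g a = u -> rng g a = u -> a = u].

Definition compact_open_bisection (U : set G) :=
  [/\ open U, compact U, homeo_onto_image (src g) U &
      homeo_onto_image (rng g) U].

Definition indic1 {S : pzSemiRingType} (U : set G) (x : G) : S :=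
  if x \in U then 1 else 0.

Definition steinberg (S : pzSemiRingType) : set (G -> S) :=
  [set f | exists l : seq (S * set G),
     (forall p, p \in l -> compact_open_bisection p.2) /\
     f = fun x => \sum_(p <- l) p.1 * indic1 p.2 x].

(** convolution (f*g)(c) = sum_{ab = c} f a g b ; the sum is over a finite
    support whenever f, g are in A_S(G) *)
Definition conv {S : pzSemiRingType} (f h : G -> S) : G -> S :=
  fun c => \sum_(p \in [set p : G * G | composable p /\ mul g p.1 p.2 = c])
             f p.1 * h p.2.

Definition equivT {S : pzSemiRingType} (f h : G -> S) :=
  forall a, trivial_isotropy (src g a) -> trivial_isotropy (rng g a) -> f a = h a.

End Defs.

From Pilot Require Import Defs.
From HB Require Import structures.
From mathcomp Require Import all_boot all_order all_algebra.
From mathcomp Require Import boolp classical_sets functions fsbigop topology.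
Local Open Scope classical_set_scope.
Local Open Scope ring_scope.

(* The relation [equivT] ("agree on every arrow whose source and range have
   trivial isotropy") is an equivalence compatible with pointwise addition and
   scaling for trivial reasons, and none of this uses the Steinberg algebra or
   the topology.  The only real content is compatibility with convolution:
   (k * f)(c) = sum_{ab = c} k(a) f(b), so it suffices that, when s(c) and r(c)
   have trivial isotropy, so do the endpoints s(b), r(b) = s(a) of both
   factors.  Since s(ab) = s(b) and r(ab) = r(a), this reduces to the purely
   groupoid-theoretic fact that trivial isotropy at r(a) forces trivial
   isotropy at s(a): conjugation by a identifies the isotropy groups at s(a)
   and r(a). *)

Section TrivialIsotropy.
Variables (G : topologicalType) (g : groupoid G).

Lemma units_rng (a : G) : units g (rng g a).
Proof. exact: Defs.src_rng. Qed.

(* If r(a) has trivial isotropy, so does s(a): an isotropy arrow x at s(a)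
   conjugates to a x a^-1 at r(a), which is then r(a), whence x = s(a). *)
Lemma trivial_isotropy_src {a : G} :
  trivial_isotropy g (rng g a) -> trivial_isotropy g (src g a).
Proof.
move=> [_ triv_r]; split; first by rewrite -(Defs.rng_inv g a); apply: units_rng.
move=> x src_x rng_x.
have a_x : src g a = rng g x by rewrite rng_x.
have ax_ai : src g (Defs.mul g a x) = rng g (Defs.inv g a).
  by rewrite Defs.src_mul // src_x Defs.rng_inv.
set y := Defs.mul g (Defs.mul g a x) (Defs.inv g a).
have y_unit : y = rng g a.
  apply: triv_r; first by rewrite /y Defs.src_mul // Defs.src_inv.
  by rewrite /y !Defs.rng_mul.
have ya : Defs.mul g y a = Defs.mul g a x.
  rewrite /y Defs.mulA ?Defs.src_inv // Defs.inv_mul.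
  by rewrite -[in RHS](Defs.mul_src g (Defs.mul g a x)) Defs.src_mul // src_x.
have : Defs.mul g (Defs.inv g a) (Defs.mul g y a) = src g a.
  by rewrite y_unit Defs.mul_rng Defs.inv_mul.
rewrite ya -Defs.mulA ?Defs.src_inv ?Defs.rng_inv //.
by rewrite Defs.inv_mul a_x Defs.mul_rng.
Qed.

Lemma factors_trivial_isotropy {a b : G} :
  composable g (a, b) ->
  trivial_isotropy g (src g (Defs.mul g a b)) ->
  trivial_isotropy g (rng g (Defs.mul g a b)) ->
  [/\ trivial_isotropy g (src g a), trivial_isotropy g (rng g a),
      trivial_isotropy g (src g b) & trivial_isotropy g (rng g b)].
Proof.
rewrite /composable /= => ab; rewrite Defs.src_mul // Defs.rng_mul //.
move=> src_b rng_a; have src_a := trivial_isotropy_src rng_a.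
by split=> //; rewrite -ab.
Qed.

Variable S : pzSemiRingType.

Lemma equivT_conv_l (k f h : G -> S) :
  equivT g f h -> equivT g (conv g k f) (conv g k h).
Proof.
move=> fh c src_c rng_c; apply: eq_fsbigr => -[a b].
rewrite inE => -[ab /= ab_c]; rewrite -ab_c in src_c rng_c.
have [_ _ src_b rng_b] := factors_trivial_isotropy ab src_c rng_c.
by congr (_ * _); apply: fh.
Qed.

Lemma equivT_conv_r (k f h : G -> S) :
  equivT g f h -> equivT g (conv g f k) (conv g h k).
Proof.
move=> fh c src_c rng_c; apply: eq_fsbigr => -[a b].
rewrite inE => -[ab /= ab_c]; rewrite -ab_c in src_c rng_c.
have [src_a rng_a _ _] := factors_trivial_isotropy ab src_c rng_c.
by congr (_ * _); apply: fh.
Qed.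

End TrivialIsotropy.

Theorem lemma3p5 (S : comPzSemiRingType) (G : topologicalType)
  (g : groupoid G) (Hample : ample g) :
  let A := @steinberg G g S in
  (* equivalence relation on A_S(G) *)
  (forall f, A f -> equivT g f f) /\
  (forall f h, A f -> A h -> equivT g f h -> equivT g h f) /\
  (forall f h k, A f -> A h -> A k ->
     equivT g f h -> equivT g h k -> equivT g f k) /\
  (* compatibility with addition and (two-sided) convolution *)
  (forall f h k, A f -> A h -> A k -> equivT g f h ->
     [/\ equivT g (k \+ f) (k \+ h),
         equivT g (conv g k f) (conv g k h) &
         equivT g (conv g f k) (conv g h k)]) /\
  (* compatibility with S-scalar multiplication *)
  (forall (c : S) f h, A f -> A h -> equivT g f h ->
     equivT g (fun x => c * f x) (fun x => c * h x)).
Proof.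
move=> A; split; first by [].
split; first by move=> f h _ _ fh a s r; rewrite fh.
split; first by move=> f h k _ _ _ fh hk a s r; rewrite fh ?hk.
split; last by move=> c f h _ _ fh a s r; rewrite fh.
move=> f h k _ _ _ fh; split.
- by move=> a s r /=; rewrite fh.
- exact: equivT_conv_l.
- exact: equivT_conv_r.
Qed.
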